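(* Let $\ell,m,n$ be positive integers with $\ell<n$, $m<n$, $\gcd(m,n)=1$, let $\mathcal{S}=\mathcal{F}[\ell,m,n]$, and let $k\in\mathbb{Z}^+$ and $\chi\in\mathbb{Z}$ with $|\chi|<k$. Then, as words, $$\mathcal{G}^+[k,\chi]=\begin{cases}\mathcal{S}^{k+\chi}\,\hat{\mathcal{X}}\,\big(\mathcal{S}^{\overline0}\big)^{-\chi}, & \chi=-k+1,\dots,-1,\\ \big(\mathcal{S}^{\overline{\ell d}}\big)^{\chi}\,\mathcal{S}^{k-\chi}\,\hat{\mathcal{X}}, & \chi=0,\dots,k-1,\end{cases}$$ $$\mathcal{G}^-[k,\chi]=\begin{cases}\mathcal{S}\,\big(\mathcal{S}^{\overline0}\big)^{-\chi}\,\hat{\mathcal{Y}}\,\mathcal{S}^{k+\chi-1}, & \chi=-k+1,\dots,0,\\ \mathcal{S}^{\overline{\ell d}}\,\hat{\mathcal{Y}}\,\mathcal{S}^{k-\chi}\,\big(\mathcal{S}^{\overline{\ell d}}\big)^{\chi-1}, & \chi=1,\dots,k-1.\end{cases}$$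
   Context: For positive integers $\ell<n$, $m<n$, $\gcd(m,n)=1$, $\mathcal{F}[\ell,m,n]$ is the $n$-periodic sequence with $\mathcal{F}[\ell,m,n]_i=L$ if $im\bmod n<\ell$ and $R$ otherwise, identified with the word $\mathcal{F}_0\cdots\mathcal{F}_{n-1}$. $d\in\{1,\dots,n-1\}$ is the inverse of $m$ mod $n$. Words over $\{L,R\}$: juxtaposition is concatenation, $\mathcal{W}^p$ is the concatenation of $p$ copies ($\mathcal{W}^0$ empty). $\mathcal{S}^{\overline j}$ is the word (length $n$) differing from $\mathcal{S}$ exactly at index $j\bmod n$. $\hat{\mathcal{X}}=\mathcal{S}_0\cdots\mathcal{S}_{n-d-1}$ and $\hat{\mathcal{Y}}=\mathcal{S}_{n-d}\cdots\mathcal{S}_{n-1}$. The left and right Farey roots of $\frac mn$ are the fractions $\frac{m^-}{n^-}<\frac{m^+}{n^+}$ with $m^\pm\ge0$, $n^\pm\ge1$, $m^-+m^+=m$, $n^-+n^+=n$, $m^+n^--m^-n^+=1$. Put $\ell^+=\lceil\ell n^+/n\rceil$, $\ell^-=\lfloor\ell n^-/n\rfloor$, $\ell_k^\pm=k\ell+\ell^\pm$, $m_k^\pm=km+m^\pm$, $n_k^\pm=kn+n^\pm$, and $\mathcal{G}^\pm[k,\chi]=\mathcal{F}[\ell_k^\pm+\chi,m_k^\pm,n_k^\pm]$, identified with its word of length $n_k^\pm$. *)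

From mathcomp Require Import all_boot all_order all_algebra.
Set Implicit Arguments. Unset Strict Implicit. Unset Printing Implicit Defensive.
Import Order.TTheory GRing.Theory Num.Theory.

Inductive LR := L | R.

Definition flipLR (x : LR) : LR := if x is L then R else L.

Definition word := seq LR.

(* The threshold l is taken in int so that G^± (whose threshold involves
   the integer chi) can be written directly; for the statement it is always
   positive. *)
Definition Fw (l : int) (m n : nat) : word :=
  mkseq (fun i => if (((i * m) %% n)%N%:Z < l)%R then L else R) n.

Definition wpow (W : word) (p : nat) : word := flatten (nseq p W).

Definition wflip (S : word) (j : nat) : word :=
  mkseq (fun i => if i == j %% size S then flipLR (nth L S i) else nth L S i)
        (size S).

Definition lplus (l n np : nat) : nat := (l * np + n.-1) %/ n.
Definition lminus (l n nm : nat) : nat := (l * nm) %/ n.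

Definition Gplus (l m n mp np k : nat) (chi : int) : word :=
  Fw ((k * l + lplus l n np)%N%:Z + chi)%R (k * m + mp) (k * n + np).
Definition Gminus (l m n mm nm k : nat) (chi : int) : word :=
  Fw ((k * l + lminus l n nm)%N%:Z + chi)%R (k * m + mm) (k * n + nm).

(* Let v i := i * m %% n, so that letter i of S is L iff v i < l, and flipping S
   at l d (resp. 0) flips exactly the letters with v i = l (resp. v i = 0).
   For G^+ put M = k m + m^+ and N = k n + n^+; the Farey relation
   M n = m N + 1 gives n * (i M %% N) = v i * N + i, so letter i of G^+ compares
   the pair (v i, i) lexicographically with (q, r), where n T = q N + r for the
   threshold T. Thus the letter is that of S except possibly when v i is the
   single residue q, where the position i decides; as v is n-periodic, cutting
   [0, N) into blocks of length n identifies every block with S or one of its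
   two flips, and the last n^+ letters with a prefix of S. For G^- the relation
   m N = M n + 1 plays the same role with the residue of (i + n^+) m, which is
   v i - 1 mod n: this shifts the blocks by n^+ and produces the suffix Y. *)

From mathcomp Require Import all_boot all_order all_algebra zify.
Import Order.TTheory GRing.Theory Num.Theory.

Set Implicit Arguments.
Unset Strict Implicit.
Unset Printing Implicit Defensive.

Definition letter (b : bool) : LR := if b then L else R.

Section Words.

Variable f : nat -> LR.

Lemma eq_in_mkseq g n : (forall i, i < n -> f i = g i) -> mkseq f n = mkseq g n.
Proof. by move=> efg; apply/eq_in_map => i; rewrite mem_iota add0n => /andP[_ /efg]. Qed.

Lemma mkseqD a b : mkseq f (a + b) = mkseq f a ++ mkseq (fun j => f (a + j)) b.
Proof. by rewrite /mkseq iotaD map_cat add0n -{2}[a]addn0 iotaDl -map_comp. Qed.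

Lemma take_mkseq r n : r <= n -> take r (mkseq f n) = mkseq f r.
Proof. by move=> le_rn; rewrite /mkseq -map_take take_iota (minn_idPl le_rn). Qed.

Lemma drop_mkseq r n : drop r (mkseq f n) = mkseq (fun j => f (r + j)) (n - r).
Proof. by rewrite /mkseq -map_drop drop_iota add0n -{1}[r]addn0 iotaDl -map_comp. Qed.

Variable n : nat.
Hypothesis f_periodic : forall i, f (i + n) = f i.

Lemma periodicMD q i : f (q * n + i) = f i.
Proof. by elim: q => [|q IHq]; rewrite ?mul0n // mulSn -addnA addnC f_periodic. Qed.

Lemma mkseq_periodic p : mkseq f (p * n) = wpow (mkseq f n) p.
Proof.
elim: p => [|p IHp] //; rewrite mulSn mkseqD /wpow /= -/(wpow _ p) -IHp.
by congr (_ ++ _); apply: eq_mkseq => j; rewrite addnC f_periodic.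
Qed.

Lemma mkseq_shift q len : mkseq (fun j => f (q * n + j)) len = mkseq f len.
Proof. by apply: eq_mkseq => j; rewrite periodicMD. Qed.

Lemma mkseq_periodicD p r : r <= n ->
  mkseq f (p * n + r) = wpow (mkseq f n) p ++ take r (mkseq f n).
Proof. by move=> le_rn; rewrite mkseqD mkseq_shift mkseq_periodic take_mkseq. Qed.

Lemma mkseq_periodic_drop p r : r <= n ->
  mkseq (fun j => f (r + j)) (p.+1 * n - r) = drop r (mkseq f n) ++ wpow (mkseq f n) p.
Proof.
move=> le_rn; rewrite -drop_mkseq mkseq_periodic /wpow /= drop_cat size_mkseq.
case: ltnP => [// | le_nr]; have -> : r = n by apply/eqP; rewrite eqn_leq le_rn.
by rewrite subnn drop0 drop_oversize ?size_mkseq.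
Qed.

End Words.

Lemma wflip_mkseq (f : nat -> LR) n j :
  wflip (mkseq f n) j = mkseq (fun i => if i == j %% n then flipLR (f i) else f i) n.
Proof.
by rewrite /wflip size_mkseq; apply: eq_in_mkseq => i lt_in; rewrite nth_mkseq.
Qed.

Lemma Fw_natE (t m n : nat) : Fw (Posz t) m n = mkseq (fun i => letter (i * m %% n < t)) n.
Proof. by apply: eq_mkseq => i; rewrite ltz_nat. Qed.

Lemma ltn_lex N a b x y : x < N -> y < N ->
  (a * N + x < b * N + y) = (a < b) || (a == b) && (x < y).
Proof.
move=> lt_xN lt_yN; case: (ltngtP a b) => [lt_ab | lt_ba | ->] /=.
- by have := leq_mul lt_ab (leqnn N); rewrite mulSn; lia.
- by have := leq_mul lt_ba (leqnn N); rewrite mulSn; lia.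
- by rewrite ltn_add2l.
Qed.

Lemma leq_predr x y : 0 < y -> (x <= y.-1) = (x < y).
Proof. by move=> y_gt0; rewrite -ltnS prednK. Qed.

Lemma eqmod_ltn n x y : x = y %[mod n] -> y < x -> y + n <= x.
Proof.
move=> /eqP eq_xy lt_yx; rewrite eqn_mod_dvd in eq_xy; last exact: ltnW.
by have := dvdn_leq _ eq_xy; rewrite subn_gt0 => /(_ lt_yx); lia.
Qed.

Lemma modn_succ_ltn n t x y : t < n -> (x + 1) %% n = y %% n ->
  (x %% n < t) = (0 < y %% n <= t).
Proof.
move=> lt_tn; rewrite -modnDml => <-.
have := @ltn_pmod x n (leq_ltn_trans (leq0n t) lt_tn); set s := x %% n => lt_sn.
case: (ltnP s.+1 n) => [lt_s1n | le_ns1]; first by rewrite addn1 modn_small.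
by rewrite (_ : s + 1 = n) ?modnn; lia.
Qed.

Section Inverse.

Variables n m d : nat.
Hypothesis dm1 : d * m = 1 %[mod n].

Lemma residue_eq i x : x < n -> (i * m %% n == x) = (i %% n == x * d %% n).
Proof.
have dmK y : y * (d * m) = y %[mod n] by rewrite -modnMmr dm1 modnMmr muln1.
move=> lt_xn; apply/eqP/eqP => [<- | ix].
  by rewrite modnMml -mulnA (mulnC m d) dmK.
by rewrite -modnMml ix modnMml -mulnA dmK modn_small.
Qed.

End Inverse.

Lemma modn_inv_uniq n m d d' : d * m = 1 %[mod n] -> d' * m = 1 %[mod n] ->
  d < n -> d' < n -> d = d'.
Proof.
move=> dm d'm lt_dn lt_d'n; rewrite -(modn_small lt_dn) -(modn_small lt_d'n).
by rewrite -[d]muln1 -modnMmr -d'm modnMmr mulnCA -modnMmr dm modnMmr muln1.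
Qed.

Lemma residue_scale_plus n m N M i : M * n = m * N + 1 -> i < N ->
  n * (i * M %% N) = (i * m %% n) * N + i.
Proof.
move=> det lt_iN.
have n_gt0 : 0 < n by move: det; case: n => //; rewrite muln0 addn1.
set s := i * m %% n; have lt_sn : s < n by rewrite ltn_pmod.
have im := divn_eq (i * m) n; rewrite -/s in im.
rewrite mulnC muln_modl //.
have -> : i * M * n = (i * m %/ n) * (N * n) + (s * N + i).
  by rewrite -mulnA det mulnDr muln1 mulnA {1}im mulnDl mulnAC mulnA addnA.
rewrite modnMDl modn_small //.
by have := leq_mul lt_sn (leqnn N); rewrite mulSn mulnC; lia.
Qed.

Lemma residue_scale_minus n m N M i a t : m * N = M * n + 1 -> 0 < i < N ->
  i * m = a * n + t -> 0 < t <= n -> n * (i * M %% N) + i = t * N.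
Proof.
move=> det /andP[i_gt0 lt_iN] im /andP[t_gt0 le_tn].
have n_gt0 : 0 < n by lia.
have le_NtN : N <= t * N by rewrite leq_pmull.
have imN : i * m * N = i * M * n + i by rewrite -mulnA det mulnDr muln1 mulnA.
have E : i * M * n + i = a * (N * n) + t * N by rewrite -imN im mulnDl mulnAC -mulnA.
rewrite mulnC muln_modl // (_ : i * M * n = a * (N * n) + (t * N - i)); last lia.
rewrite modnMDl modn_small; first lia.
by have := leq_mul le_tn (leqnn N); rewrite [n * N]mulnC; lia.
Qed.

Section Christoffel.

Variables l m n mm nm mp np k : nat.
Hypotheses (l_gt0 : 0 < l) (lt_ln : l < n) (m_gt0 : 0 < m).
Hypotheses (nm_gt0 : 0 < nm) (np_gt0 : 0 < np) (nmnp : nm + np = n).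
Hypotheses (det_right : mp * n = m * np + 1) (det_left : m * nm = mm * n + 1).

(* [nm] is the inverse of [m] modulo [n], so [e] is the flip position [l d mod n]. *)
Local Notation e := (l * nm %% n).
Local Notation S := (Fw (Posz l) m n).

Definition residue_letter (P : pred nat) i := letter (P (i * m %% n)).

Lemma n_gt0 : 0 < n. Proof. lia. Qed.

Lemma np_m_det : np * m + 1 = mp * n.
Proof. by rewrite mulnC det_right. Qed.

Lemma nm_inv : nm * m = 1 %[mod n].
Proof. by rewrite mulnC det_left modnMDl. Qed.

Lemma residue_l i : (i * m %% n == l) = (i %% n == e).
Proof. exact: residue_eq nm_inv i l lt_ln. Qed.

Lemma residue_0 i : (i * m %% n == 0) = (i %% n == 0).
Proof. by rewrite (residue_eq nm_inv i n_gt0) mod0n. Qed.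

Lemma e_gt0 : 0 < e.
Proof.
have := residue_l (l * nm); rewrite eqxx => /eqP vl.
by rewrite lt0n -residue_0 vl -lt0n.
Qed.

Lemma e_lt_n : e < n. Proof. exact: ltn_pmod n_gt0. Qed.

Lemma lplusE : n * lplus l n np = l * np + e.
Proof.
have := divn_eq (l * nm) n; set q := l * nm %/ n => lnm.
have E : l * np + e = (l - q) * n.
  have ln : l * n = l * nm + l * np by rewrite -mulnDr nmnp.
  by rewrite mulnBl; lia.
rewrite /lplus (_ : l * np + n.-1 = (l - q) * n + (n.-1 - e)); last first.
  by have := e_lt_n; lia.
have small : n.-1 - e < n by lia.
by rewrite divnMDl ?n_gt0 // divn_small // addn0 mulnC E.
Qed.

Lemma lminusE : l * nm = n * lminus l n nm + e.
Proof. by rewrite /lminus {1}(divn_eq (l * nm) n) mulnC. Qed.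

Lemma residue_letter_periodic P i : residue_letter P (i + n) = residue_letter P i.
Proof. by rewrite /residue_letter mulnDl addnC [n * _]mulnC modnMDl. Qed.

Lemma S_residueE : S = mkseq (residue_letter (fun s => s < l)) n.
Proof. exact: Fw_natE. Qed.

Lemma wflip_S_ldE : wflip S (l * nm) = mkseq (residue_letter (fun s => s <= l)) n.
Proof.
rewrite S_residueE wflip_mkseq; apply: eq_in_mkseq => i lt_in.
rewrite /residue_letter -{1}(modn_small lt_in) -residue_l.
by case: eqP => [-> | /eqP ne_vl] /=; rewrite ?ltnn ?leqnn // ltn_neqAle ne_vl.
Qed.

Lemma wflip_S_0E : wflip S 0 = mkseq (residue_letter (fun s => 0 < s < l)) n.
Proof.
rewrite S_residueE wflip_mkseq; apply: eq_in_mkseq => i lt_in.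
rewrite /residue_letter mod0n -{1}(modn_small lt_in) -residue_0.
by case: eqP => [-> | /eqP ne_v0] /=; rewrite ?l_gt0 // lt0n ne_v0.
Qed.

Local Notation Mp := (k * m + mp).
Local Notation Np := (k * n + np).
Local Notation Mm := (k * m + mm).
Local Notation Nm := (k * n + nm).

Lemma det_plus : Mp * n = m * Np + 1.
Proof. by rewrite mulnDl det_right mulnDr; lia. Qed.

Lemma det_minus : m * Nm = Mm * n + 1.
Proof. by rewrite mulnDr det_left mulnDl; lia. Qed.

Lemma Gplus_residue i t : i < Np ->
  (i * Mp %% Np < t) = (i * m %% n * Np + i < n * t).
Proof. by move=> lt_iN; rewrite -(ltn_pmul2l n_gt0) (residue_scale_plus det_plus lt_iN). Qed.

Lemma Gminus_residue i t : 0 < i < Nm ->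
  (i * Mm %% Nm < t) = ((i + np) * m %% n * Nm + (Nm - i) < n * t).
Proof.
move=> /andP[i_gt0 lt_iN].
have := divn_eq ((i + np) * m) n; set q := _ %/ n; set w := _ %% n => im.
have lt_wn : w < n by rewrite ltn_pmod ?n_gt0.
have npm := np_m_det.
have im_gt0 : 0 < i * m by rewrite muln_gt0 i_gt0.
rewrite mulnDl in im.
have le_mpq : mp <= q.
  by rewrite leqNgt; apply/negP => lt_qmp; have := leq_mul lt_qmp (leqnn n); lia.
have im' : i * m = (q - mp) * n + w.+1.
  by rewrite mulnBl; have := leq_mul le_mpq (leqnn n); lia.
have key : n * (i * Mm %% Nm) + i = w.+1 * Nm.
  by apply: (residue_scale_minus det_minus _ im'); rewrite ?i_gt0 ?lt_iN.
by rewrite -(ltn_pmul2l n_gt0); rewrite mulSn in key; lia.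
Qed.

Lemma Gplus_nonneg c : c < k ->
  Gplus l m n mp np k c = wpow (wflip S (l * nm)) c ++ wpow S (k - c) ++ take np S.
Proof.
move=> lt_ck; rewrite /Gplus -PoszD.
have kcn : (k - c) * n + c * n = k * n by rewrite -mulnDl subnK // ltnW.
move: (k - c) kcn => p kcn.
have lt_tau : e + c * n < Np.
  by have := e_lt_n; have := leq_mul lt_ck (leqnn n); rewrite mulSn; lia.
have nT : n * (k * l + lplus l n np + c) = l * Np + (e + c * n).
  by rewrite !mulnDr lplusE; nia.
have GE i : i < Np -> (i * Mp %% Np < k * l + lplus l n np + c) =
    (i * m %% n < l) || (i * m %% n == l) && (i < e + c * n).
  by move=> lt_iN; rewrite Gplus_residue // nT ltn_lex.
rewrite Fw_natE wflip_S_ldE S_residueE -(mkseq_periodic (residue_letter_periodic _)).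
rewrite -(mkseq_periodicD (residue_letter_periodic _)); last lia.
have splitN : c * n + (p * n + np) = Np by lia.
rewrite -[X in mkseq _ X]splitN mkseqD; congr (_ ++ _).
  apply: eq_in_mkseq => i lt_icn; rewrite /residue_letter GE; last lia.
  have -> : i < e + c * n by lia.
  by rewrite andbT orbC -leq_eqVlt.
rewrite -(mkseq_shift (residue_letter_periodic _) c); apply: eq_in_mkseq => j lt_j.
rewrite /residue_letter GE; last lia.
case: eqP => [vl | _]; last by rewrite orbF.
have := residue_l (c * n + j); rewrite vl eqxx modnMDl => /esym/eqP je.
have le_ej : e <= j by rewrite -je leq_mod.
have : e + c * n <= c * n + j by clear -le_ej; lia.
by rewrite ltnn /= ltnNge => ->.
Qed.

Lemma Gplus_neg c : 0 < c < k ->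
  Gplus l m n mp np k (- c%:Z) = wpow S (k - c) ++ take np S ++ wpow (wflip S 0) c.
Proof.
move=> /andP[c_gt0 lt_ck].
rewrite /Gplus subzn; last by have := leq_pmulr k l_gt0; lia.
have kcn : (k - c) * n + c * n = k * n by rewrite -mulnDl subnK // ltnW.
move: (k - c) kcn => p kcn.
have ncn : n <= c * n by rewrite leq_pmull.
have nT : n * (k * l + lplus l n np - c) = l.-1 * Np + (Np + e - c * n).
  have lN : l * Np = l.-1 * Np + Np by rewrite -mulSnr prednK.
  have lNp : n * (k * l) + l * np = l * Np by rewrite mulnDr; nia.
  have : k * n <= l * (k * n) by rewrite leq_pmull.
  by rewrite mulnBr mulnDr lplusE [n * c]mulnC; have := e_lt_n; lia.
have GE i : i < Np -> (i * Mp %% Np < k * l + lplus l n np - c) =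
    (i * m %% n < l.-1) || (i * m %% n == l.-1) && (i < Np + e - c * n).
  by move=> lt_iN; rewrite Gplus_residue // nT ltn_lex //; have := e_lt_n; lia.
rewrite Fw_natE wflip_S_0E S_residueE catA -(mkseq_periodicD (residue_letter_periodic _)); last lia.
rewrite -(mkseq_periodic (residue_letter_periodic _)).
have splitN : p * n + np + c * n = Np by lia.
rewrite -[X in mkseq _ X]splitN mkseqD; congr (_ ++ _).
  apply: eq_in_mkseq => i lt_i; rewrite /residue_letter GE; last lia.
  rewrite (_ : i < Np + e - c * n) ?andbT; last lia.
  by rewrite orbC -leq_eqVlt leq_predr.
apply: eq_in_mkseq => j lt_j; rewrite /residue_letter GE; last lia.
have succ : (p * n + np + j) * m + 1 = j * m %[mod n].
  have : (p * n + np + j) * m + 1 = (p * m + mp) * n + j * m.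
    by rewrite !mulnDl -np_m_det; lia.
  by move=> ->; rewrite modnMDl.
rewrite (modn_succ_ltn _ succ) ?(leq_ltn_trans (leq_pred l)) //.
case: eqP => [vl | _]; last by rewrite orbF leq_predr.
rewrite -modnDml vl addn1 prednK // modn_small // in succ.
have := residue_l j; rewrite -succ eqxx => /esym/eqP je.
have le_ej : e <= j by rewrite -je leq_mod.
have : Np + e - c * n <= p * n + np + j by clear -kcn le_ej; lia.
by move/leq_gtF => ->; rewrite andbF orbF leq_predr.
Qed.

Lemma Gminus_nonpos c : c < k ->
  Gminus l m n mm nm k (- c%:Z) = S ++ wpow (wflip S 0) c ++ drop np S ++ wpow S (k - c - 1).
Proof.
move=> lt_ck.
rewrite /Gminus subzn; last by have := leq_pmulr k l_gt0; lia.
have kcn : (k - c - 1).+1 * n + c * n = k * n by rewrite -mulnDl; congr (_ * n); lia.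
move: (k - c - 1) kcn => q kcn.
have lt_en := e_lt_n; have e_pos := e_gt0.
have nT : n * (k * l + lminus l n nm - c) = l.-1 * Nm + (Nm - (e + c * n)).
  have lN : l * Nm = l.-1 * Nm + Nm by rewrite -mulSnr prednK.
  have lNm : n * (k * l) + l * nm = l * Nm by rewrite mulnDr; nia.
  have : k * n <= l * (k * n) by rewrite leq_pmull.
  have := lminusE; rewrite mulnBr mulnDr [n * c]mulnC; lia.
have GE i : 0 < i < Nm -> (i * Mm %% Nm < k * l + lminus l n nm - c) =
    ((i + np) * m %% n < l.-1) || ((i + np) * m %% n == l.-1) && (e + c * n < i).
  by move=> /andP[i_gt0 lt_iN]; rewrite Gminus_residue ?i_gt0 // nT ltn_lex; lia.
have succ i : (i + np) * m + 1 = i * m %[mod n].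
  by rewrite mulnDl -addnA np_m_det addnC modnMDl.
rewrite Fw_natE wflip_S_0E S_residueE -(mkseq_periodic_drop (residue_letter_periodic _)); last lia.
rewrite -(mkseq_periodic (residue_letter_periodic _)).
have splitN : n + (c * n + (q.+1 * n - np)) = Nm by rewrite mulSn; lia.
rewrite -[X in mkseq _ X]splitN !mkseqD; congr (_ ++ _ ++ _).
- apply: eq_in_mkseq => i lt_in; rewrite /residue_letter.
  case: (posnP i) => [-> | i_gt0].
    have := leq_pmulr k l_gt0; rewrite !mul0n !mod0n l_gt0 => le_kkl.
    by congr letter; lia.
  rewrite GE ?i_gt0; last lia.
  rewrite (modn_succ_ltn _ (succ i)) ?(leq_ltn_trans (leq_pred l)) // leq_predr //.
  have v_gt0 : 0 < i * m %% n by rewrite lt0n residue_0 modn_small // -lt0n.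
  rewrite v_gt0; case: eqP => [wl | _]; last by rewrite orbF.
  have := succ i; rewrite -modnDml wl addn1 prednK // modn_small // => vl.
  have := residue_l i; rewrite -vl eqxx modn_small // => /esym/eqP ie.
  by rewrite ltnn ie ltnNge leq_addr.
- rewrite -(mkseq_shift (residue_letter_periodic _) 1); apply: eq_in_mkseq => j lt_j.
  rewrite /residue_letter mul1n GE; last lia.
  rewrite (modn_succ_ltn _ (succ _)) ?(leq_ltn_trans (leq_pred l)) // leq_predr //.
  case: eqP => [wl | _]; last by rewrite andFb orbF.
  have := succ (n + j); rewrite -modnDml wl addn1 prednK // modn_small // => vl.
  have := residue_l (n + j); rewrite -vl eqxx => /esym/eqP je.
  have cong : n + j = e + c * n %[mod n] by rewrite je addnC modnMDl modn_mod.
  suff -> : (e + c * n < n + j) = false by rewrite ltnn andbF.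
  by apply/negP => /(eqmod_ltn cong); clear -lt_j; lia.
- apply: eq_in_mkseq => j lt_j.
  rewrite -(periodicMD (residue_letter_periodic _) c.+1) /residue_letter.
  rewrite (_ : c.+1 * n + (np + j) = n + (c * n + j) + np); last by rewrite mulSn; lia.
  rewrite GE; last lia.
  have -> : e + c * n < n + (c * n + j) by lia.
  by rewrite andbT orbC -leq_eqVlt leq_predr.
Qed.

Lemma Gminus_pos c : 0 < c < k ->
  Gminus l m n mm nm k c =
    wflip S (l * nm) ++ drop np S ++ wpow S (k - c) ++ wpow (wflip S (l * nm)) (c - 1).
Proof.
case: c => // c /andP[_ lt_ck]; rewrite subSS subn0 /Gminus -PoszD.
have kcn : (k - c.+1) * n + c.+1 * n = k * n by rewrite -mulnDl subnK // ltnW.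
have le_npn : n <= (k - c.+1) * n by rewrite leq_pmull // subn_gt0.
move: (k - c.+1) kcn le_npn => p kcn le_npn.
have lt_en := e_lt_n; have e_pos := e_gt0.
have nT : n * (k * l + lminus l n nm + c.+1) = l * Nm + (c.+1 * n - e).
  have lNm : n * (k * l) + l * nm = l * Nm by rewrite mulnDr; nia.
  by have := lminusE; rewrite !mulnDr [n * c.+1]mulnC; lia.
have GE i : 0 < i < Nm -> (i * Mm %% Nm < k * l + lminus l n nm + c.+1) =
    ((i + np) * m %% n < l) || ((i + np) * m %% n == l) && (Nm - i < c.+1 * n - e).
  by move=> /andP[i_gt0 lt_iN]; rewrite Gminus_residue ?i_gt0 // nT ltn_lex; lia.
have succ i : (i + np) * m + 1 = i * m %[mod n].
  by rewrite mulnDl -addnA np_m_det addnC modnMDl.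
rewrite Fw_natE wflip_S_ldE S_residueE [drop _ _ ++ _]catA.
rewrite -(mkseq_periodic_drop (residue_letter_periodic _)); last lia.
rewrite -(mkseq_periodic (residue_letter_periodic _)).
have splitN : n + (p.+1 * n - np + c * n) = Nm by rewrite mulSn; lia.
rewrite -[X in mkseq _ X]splitN !mkseqD; congr (_ ++ _ ++ _).
- apply: eq_in_mkseq => i lt_in; rewrite /residue_letter.
  case: (posnP i) => [-> | i_gt0]; first by rewrite !mul0n !mod0n; congr letter; lia.
  rewrite GE ?i_gt0; last lia.
  rewrite (modn_succ_ltn _ (succ i)) //.
  have v_gt0 : 0 < i * m %% n by rewrite lt0n residue_0 modn_small // -lt0n.
  have -> : (Nm - i < c.+1 * n - e) = false by lia.
  by rewrite v_gt0 andbF orbF.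
- apply: eq_in_mkseq => j lt_j.
  rewrite -(periodicMD (residue_letter_periodic _) 1) /residue_letter.
  rewrite (_ : 1 * n + (np + j) = n + j + np); last lia.
  rewrite GE; last lia.
  case: eqP => [wl | _]; last by rewrite andFb orbF.
  have := residue_l (n + j + np); rewrite wl eqxx => /esym/eqP je.
  have cong : j + np = p * n + e %[mod n] by rewrite -modnDl addnA je modnMDl modn_mod.
  suff -> : (Nm - (n + j) < c.+1 * n - e) = false by rewrite ltnn.
  apply/negP => lt; have : p * n + e < j + np by clear -lt kcn nmnp; lia.
  by move/(eqmod_ltn cong); clear -lt_j; lia.
- apply: eq_in_mkseq => j lt_j.
  rewrite -(periodicMD (residue_letter_periodic _) p.+2) /residue_letter.
  rewrite (_ : p.+2 * n + j = n + (p.+1 * n - np + j) + np); last by rewrite !mulSn; lia.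
  rewrite GE; last lia.
  have -> : Nm - (n + (p.+1 * n - np + j)) < c.+1 * n - e by lia.
  by rewrite andbT orbC -leq_eqVlt.
Qed.

End Christoffel.

Theorem proposition3p8
  (l m n : nat) (hl0 : (0 < l)%N) (hm0 : (0 < m)%N)
  (hln : (l < n)%N) (hmn : (m < n)%N) (hcop : coprime m n)
  (d : nat) (hd1 : (0 < d < n)%N) (hd : (d * m) %% n = 1 %% n)
  (mm nm mp np : nat) (hnm : (0 < nm)%N) (hnp : (0 < np)%N)
  (hmsum : (mm + mp)%N = m) (hnsum : (nm + np)%N = n)
  (hdet : (mp * nm)%N = (mm * np + 1)%N)
  (hlt : (mm * np < mp * nm)%N)
  (k : nat) (hk : (0 < k)%N) (chi : int) (hchi : (`|chi| < k)%N) :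
  let S := Fw (Posz l) m n in
  let Xh := take (n - d) S in
  let Yh := drop (n - d) S in
  let c := `|chi|%N in
  ((chi < 0)%R ->
     Gplus l m n mp np k chi = wpow S (k - c) ++ Xh ++ wpow (wflip S 0) c)
  /\ ((0 <= chi)%R ->
     Gplus l m n mp np k chi = wpow (wflip S (l * d)) c ++ wpow S (k - c) ++ Xh)
  /\ ((chi <= 0)%R ->
     Gminus l m n mm nm k chi = S ++ wpow (wflip S 0) c ++ Yh ++ wpow S (k - c - 1))
  /\ ((0 < chi)%R ->
     Gminus l m n mm nm k chi =
       wflip S (l * d) ++ Yh ++ wpow S (k - c) ++ wpow (wflip S (l * d)) (c - 1)).
Proof.
have det_right : mp * n = m * np + 1 by rewrite -hnsum -hmsum; nia.
have det_left : m * nm = mm * n + 1 by rewrite -hnsum -hmsum; nia.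
have lt_dn : d < n by case/andP: hd1.
have ->: d = nm by apply: modn_inv_uniq hd (nm_inv det_left) lt_dn _; lia.
rewrite (_ : n - nm = np); last lia.
move=> S Xh Yh c; subst S Xh Yh c.
have Gp0 := Gplus_nonneg (k := k) hl0 hln hm0 hnm hnp hnsum det_right det_left.
have Gp1 := Gplus_neg (k := k) hl0 hln hm0 hnm hnp hnsum det_right det_left.
have Gm0 := Gminus_nonpos (k := k) hl0 hln hm0 hnm hnp hnsum det_right det_left.
have Gm1 := Gminus_pos (k := k) hl0 hln hm0 hnm hnp hnsum det_right det_left.
case: chi hchi => c /= hchi; last rewrite NegzE.
  split; first by move=> ?; lia.
  split; first by move=> _; apply: Gp0.
  split; last by move=> c_gt0; apply: Gm1; lia.
  move=> c_le0; have -> : c = 0 by lia.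
  by have := Gm0 0 hk; rewrite oppr0.
split; first by move=> _; apply: Gp1; lia.
split; first by move=> ?; lia.
split; first by move=> _; apply: Gm0.
by move=> ?; lia.
Qed.
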